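(* Let $\mathscr V\subset\mathbb{R}_{\max}^n$ be a max-plus cone with full support. If $\mathscr V$ is contained in a half-space $\mathscr H$, then there exists a half-space $\mathscr H'$ such that $\mathscr V\subset\mathscr H'\subset\mathscr H$ and $\mathscr H'$ is minimal for inclusion among half-spaces containing $\mathscr V$ (i.e. there is no half-space $\mathscr H''$ with $\mathscr V\subset\mathscr H''\subsetneq\mathscr H'$).
   Context: $\mathbb{R}_{\max}=\mathbb{R}\cup\{-\infty\}$ with $a\oplus b=\max(a,b)$, $ab=a+b$. A max-plus cone is a set $\mathscr V\subset\mathbb{R}_{\max}^n$ with $\lambda u\oplus\mu v\in\mathscr V$ for all $u,v\in\mathscr V$, $\lambda,\mu\in\mathbb{R}_{\max}$ (entrywise operations). A half-space of $\mathbb{R}_{\max}^n$ is a set $\{x:\bigoplus_{i=1}^n a_ix_i\le\bigoplus_{j=1}^n b_jx_j\}$ with $a,b\in\mathbb{R}_{\max}^n$. $\mathscr V$ has full support if for every $k\in\{1,\dots,n\}$ some $v\in\mathscr V$ has $v_k\neq-\infty$. *)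

From mathcomp Require Import all_boot all_order all_algebra.
From mathcomp Require Import reals.
Set Implicit Arguments. Unset Strict Implicit. Unset Printing Implicit Defensive.
Import Order.TTheory GRing.Theory Num.Theory.
Local Open Scope ring_scope.

(* R_max = R ∪ {-oo}; None encodes -oo. *)
Definition rmax (R : realType) := option R.

Definition madd (R : realType) (a b : rmax R) : rmax R :=
  match a, b with
  | None, _ => b
  | _, None => a
  | Some x, Some y => Some (Num.max x y)
  end.

Definition mmul (R : realType) (a b : rmax R) : rmax R :=
  match a, b with
  | Some x, Some y => Some (x + y)
  | _, _ => None
  end.

Definition mle (R : realType) (a b : rmax R) : Prop :=
  match a, b with
  | None, _ => True
  | Some _, None => False
  | Some x, Some y => x <= y
  end.

Definition mvec (R : realType) (n : nat) := 'I_n -> rmax R.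

Definition mdot (R : realType) (n : nat) (a x : mvec R n) : rmax R :=
  \big[@madd R/None]_(i < n) mmul (a i) (x i).

Definition mp_cone (R : realType) (n : nat) (V : mvec R n -> Prop) : Prop :=
  forall u v : mvec R n, V u -> V v -> forall lam mu : rmax R,
    V (fun i => madd (mmul lam (u i)) (mmul mu (v i))).

Definition full_support (R : realType) (n : nat) (V : mvec R n -> Prop) : Prop :=
  forall k : 'I_n, exists v, V v /\ v k <> None.

Definition halfspace (R : realType) (n : nat) (a b : mvec R n) : mvec R n -> Prop :=
  fun x => mle (mdot a x) (mdot b x).

Definition msubset (R : realType) (n : nat) (A B : mvec R n -> Prop) : Prop :=
  forall x, A x -> B x.

From mathcomp Require Import all_boot all_order all_algebra.
From mathcomp Require Import reals.
From mathcomp Require Import boolp classical_sets.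
From HB Require Import structures.
Set Implicit Arguments. Unset Strict Implicit. Unset Printing Implicit Defensive.
Import Order.TTheory GRing.Theory Num.Theory.
Local Open Scope ring_scope.

(* Any half-space can be written H(a, b) with disjoint supports (a_i = -oo or
   b_i = -oo for every i) without changing it.  Starting from a proper
   half-space H(a, b) with V ⊆ H(a, b) ⊆ H, lower each b_j as far as V
   allows, then raise each a_k facing b_k = -oo as far as V allows; these optima
   exist by completeness of R (max-plus residuation), and full support keeps the
   raised a_k finite.  If V ⊆ H(c, d) ⊆ H(a, b) with (c, d) disjointly supported,
   testing the inclusion on vectors supported on one or two coordinates yields a
   scalar l with a <= l c and l d <= b; extremality of (a, b) then forces
   l c <= a and b <= l d, so H(a, b) ⊆ H(c, d).  If no proper half-space lies
   between V and H, H itself is minimal. *)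

Section MaxPlusScalars.
Variable R : realType.
Implicit Types p q r s t u : rmax R.

Definition mleb p q : bool :=
  match p, q with
  | None, _ => true
  | Some _, None => false
  | Some x, Some y => x <= y
  end.

Lemma mleP p q : reflect (mle p q) (mleb p q).
Proof. by case: p => [x|]; case: q => [y|] /=; [apply: idP | constructor..]. Qed.

Lemma mle_refl p : mle p p.
Proof. by case: p => /=. Qed.

Lemma mle_trans q p r : mle p q -> mle q r -> mle p r.
Proof. by case: p => [x|] //; case: q => [y|] //; case: r => [z|] //; apply: le_trans. Qed.

Lemma mle_None p : mle p None -> p = None.
Proof. by case: p. Qed.

Lemma maddA : associative (@madd R).
Proof. by case=> [x|] [y|] [z|] //=; rewrite maxA. Qed.

Lemma maddC : commutative (@madd R).
Proof. by case=> [x|] [y|] //=; rewrite maxC. Qed.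

Lemma madd0m : left_id None (@madd R).
Proof. by case. Qed.

HB.instance Definition _ := Monoid.isComLaw.Build (rmax R) None (@madd R) maddA maddC madd0m.

Lemma madd_sel p q : madd p q = p \/ madd p q = q.
Proof.
case: p => [x|]; case: q => [y|] /=; auto.
by rewrite /Num.max; case: ifP; auto.
Qed.

Lemma ge_madd p q r : mle (madd p q) r <-> mle p r /\ mle q r.
Proof.
case: p => [x|]; case: q => [y|] /=; try tauto.
by case: r => [z|] /=; [rewrite ge_max; split => [/andP[]|[-> ->]] | tauto].
Qed.

Lemma mle_maddl p q : mle p (madd p q).
Proof. by have /ge_madd[] := mle_refl (madd p q). Qed.

Lemma mle_maddr p q : mle q (madd p q).
Proof. by have /ge_madd[] := mle_refl (madd p q). Qed.

Lemma le_madd p q r : mle p (madd q r) <-> mle p q \/ mle p r.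
Proof.
split; first by case: (madd_sel q r) => ->; auto.
by case=> pq; [exact: mle_trans pq (mle_maddl _ _) | exact: mle_trans pq (mle_maddr _ _)].
Qed.

Lemma mmulp0 p : mmul p None = None.
Proof. by case: p. Qed.

Lemma mmulDr p q r : mmul p (madd q r) = madd (mmul p q) (mmul p r).
Proof. by case: p => [x|]; case: q => [y|]; case: r => [z|] //=; rewrite addr_maxr. Qed.

Lemma mle_mmul2r r p q : mle p q -> mle (mmul p r) (mmul q r).
Proof. by case: p => [x|]; case: q => [y|]; case: r => [z|] //= xy; rewrite lerD2r. Qed.

Lemma mle_mmul2r_cancel r p q : r <> None -> mle (mmul p r) (mmul q r) -> mle p q.
Proof. by case: r => [z|] // _; case: p => [x|]; case: q => [y|] //=; rewrite lerD2r. Qed.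

Lemma mmulA (l : R) p q : mmul (mmul (Some l) p) q = mmul (Some l) (mmul p q).
Proof. by case: p => [x|]; case: q => [y|] //=; rewrite addrA. Qed.

Lemma mle_mmul2l_fin (l : R) p q : mle (mmul (Some l) p) (mmul (Some l) q) <-> mle p q.
Proof. by case: p => [x|]; case: q => [y|] //=; rewrite lerD2l. Qed.

Lemma mle_divlMr (k : R) t s : mle t (mmul s (Some (- k))) <-> mle (mmul t (Some k)) s.
Proof. by case: t => [x|]; case: s => [y|] //=; rewrite lerBrDr. Qed.

Lemma mle_divrMr (k : R) p t : mle (mmul p (Some (- k))) t <-> mle p (mmul t (Some k)).
Proof. by case: p => [x|]; case: t => [y|] //=; rewrite lerBlDr. Qed.

Lemma rmax_lub (S : rmax R -> Prop) m : (forall s, S s -> mle s m) ->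
  exists l, (forall s, S s -> mle s l) /\ forall u, (forall s, S s -> mle s u) -> mle l u.
Proof.
move=> Sm; have [[x0 Sx0]|noreal] := pselect (exists x, S (Some x)); last first.
  exists None; split=> [[x|] Sx|] //; exfalso; apply: noreal; by exists x.
case Em: m (Sm _ Sx0) => [M|] // _.
have supF : has_sup (fun x => S (Some x)).
  by split; [exists x0 | exists M => x Sx; move: (Sm _ Sx); rewrite Em].
exists (Some (sup (fun x => S (Some x)))); split=> [[x|] Sx|u ub] //=.
  exact: sup_upper_bound.
case: u ub (ub _ Sx0) => [U|] ub //= _; apply: ge_sup; first by exists x0.
by move=> x /ub.
Qed.

Lemma greatest_scalar_solution (I : Type) (D : I -> Prop) (q s : I -> rmax R) i0 :
  D i0 -> q i0 <> None ->
  exists t, (forall i, D i -> mle (mmul t (q i)) (s i)) /\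
    forall t', (forall i, D i -> mle (mmul t' (q i)) (s i)) -> mle t' t.
Proof.
move=> Di0; case Eq0: (q i0) => [k0|] // _.
pose T t := forall i, D i -> mle (mmul t (q i)) (s i).
have below_ratio i k : D i -> q i = Some k -> forall t, T t -> mle t (mmul (s i) (Some (- k))).
  by move=> Di Eq t Tt; apply/mle_divlMr; rewrite -Eq; apply: Tt.
have [l [ub_l least_l]] := rmax_lub (below_ratio _ _ Di0 Eq0).
exists l; split=> // i Di; case Eq: (q i) => [k|]; last by rewrite mmulp0.
by apply/mle_divlMr; apply: least_l; apply: below_ratio Eq.
Qed.

Lemma least_scalar_solution (I : Type) (D : I -> Prop) (p q r : I -> rmax R) t0 :
  (forall i, D i -> mle (p i) (madd (mmul t0 (q i)) (r i))) ->
  exists t, (forall i, D i -> mle (p i) (madd (mmul t (q i)) (r i))) /\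
    forall t', (forall i, D i -> mle (p i) (madd (mmul t' (q i)) (r i))) -> mle t t'.
Proof.
pose T t := forall i, D i -> mle (p i) (madd (mmul t (q i)) (r i)).
pose S s := exists i k, [/\ D i, ~ mle (p i) (r i), q i = Some k & s = mmul (p i) (Some (- k))].
have above_ratios t : T t -> forall s, S s -> mle s t.
  move=> Tt _ [i [k [Di pr Eq ->]]]; apply/mle_divrMr; rewrite -Eq.
  by case/le_madd: (Tt i Di).
move=> Tt0; have [l [ub_l least_l]] := rmax_lub (above_ratios _ Tt0).
exists l; split=> [i Di|t' /above_ratios]; last exact: least_l.
have [pr|pr] := mleP (p i) (r i); first exact: mle_trans pr (mle_maddr _ _).
case Eq: (q i) => [k|]; last first.
  by exfalso; apply: pr; move: (Tt0 i Di); rewrite Eq mmulp0.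
apply/le_madd; left; apply/mle_divrMr; apply: ub_l; by exists i, k.
Qed.

End MaxPlusScalars.

Definition upd (T : Type) (m : nat) (f : 'I_m -> T) (k : 'I_m) (t : T) : 'I_m -> T :=
  fun i => if i == k then t else f i.

Lemma upd_same (T : Type) (m : nat) (f : 'I_m -> T) k t : upd f k t k = t.
Proof. by rewrite /upd eqxx. Qed.

Lemma upd_other (T : Type) (m : nat) (f : 'I_m -> T) k t i : i != k -> upd f k t i = f i.
Proof. by rewrite /upd => /negbTE ->. Qed.

Lemma upd_upd (T : Type) (m : nat) (f : 'I_m -> T) k t t' : upd (upd f k t) k t' = upd f k t'.
Proof. by apply: funext => i; rewrite /upd; case: (i == k). Qed.

Section MaxPlusVectors.
Variables (R : realType) (n : nat).
Implicit Types (a b c d x y : mvec R n) (p z : rmax R) (F : 'I_n -> rmax R).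

Lemma mle_bigmadd F i : mle (F i) (\big[@madd R/None]_j F j).
Proof. by rewrite (bigD1 i) //=; apply: mle_maddl. Qed.

Lemma bigmadd_le F z : mle (\big[@madd R/None]_j F j) z <-> forall i, mle (F i) z.
Proof.
split=> [Fz i|Fz]; first exact: mle_trans (mle_bigmadd F i) Fz.
by elim/big_ind: _ => // p q pz qz; apply/ge_madd.
Qed.

Lemma bigmadd_sel F : \big[@madd R/None]_j F j = None \/ exists i, \big[@madd R/None]_j F j = F i.
Proof.
elim/big_ind: _ => [| p q Hp Hq | i _]; [by left | | by right; exists i].
case: (madd_sel p q) => ->; [exact: Hp | exact: Hq].
Qed.

Lemma exists_argmax F (i0 : 'I_n) : exists m, forall i, mle (F i) (F m).
Proof.
have [Enone|[m Em]] := bigmadd_sel F; last by exists m => i; rewrite -Em; apply: mle_bigmadd.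
by exists i0 => i; move: (mle_bigmadd F i); rewrite Enone => /mle_None ->.
Qed.

Lemma mdot_le a x z : mle (mdot a x) z <-> forall i, mle (mmul (a i) (x i)) z.
Proof. exact: bigmadd_le. Qed.

Lemma mle_mdot a x i : mle (mmul (a i) (x i)) (mdot a x).
Proof. exact: (mle_bigmadd (fun i => mmul (a i) (x i))). Qed.

Lemma mdot_sel a x : mdot a x = None \/ exists i, mdot a x = mmul (a i) (x i).
Proof. exact: bigmadd_sel. Qed.

Lemma mle_mdotl a b x : (forall i, mle (a i) (b i)) -> mle (mdot a x) (mdot b x).
Proof.
move=> ab; apply/mdot_le => i; apply: mle_trans (mle_mdot b x i).
exact: mle_mmul2r.
Qed.

Lemma mdot_upd a x j : mdot a x = madd (mmul (a j) (x j)) (mdot (upd a j None) x).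
Proof.
rewrite /mdot (bigD1 j) //= [in RHS](bigD1 j) //= upd_same /=.
by congr madd; apply: eq_bigr => i ij; rewrite upd_other.
Qed.

Definition vadd x y : mvec R n := fun i => madd (x i) (y i).

Definition mpoint (i : 'I_n) (s : R) : mvec R n := fun j => if j == i then Some s else None.

Definition mscale (l : R) a : mvec R n := fun i => mmul (Some l) (a i).

Lemma mdot_vadd a x y : mdot a (vadd x y) = madd (mdot a x) (mdot a y).
Proof. by rewrite /mdot -big_split; apply: eq_bigr => i _; apply: mmulDr. Qed.

Lemma mdot_mpoint a i s : mdot a (mpoint i s) = mmul (a i) (Some s).
Proof.
rewrite /mdot (bigD1 i) //= big1 => [|j /negbTE ji]; last by rewrite /mpoint ji mmulp0.
by rewrite /mpoint eqxx; case: (mmul _ _).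
Qed.

Lemma mdot_scale l a x : mdot (mscale l a) x = mmul (Some l) (mdot a x).
Proof.
rewrite /mdot (big_morph (mmul (Some l)) (mmulDr _) (mmulp0 _)).
by apply: eq_bigr => i _; rewrite mmulA.
Qed.

Lemma halfspace_subset a b a' b' :
  (forall i, mle (a i) (a' i)) -> (forall i, mle (b' i) (b i)) ->
  msubset (halfspace a' b') (halfspace a b).
Proof.
move=> aa' b'b x hx; apply: mle_trans (mle_mdotl x aa') _.
exact: mle_trans hx (mle_mdotl x b'b).
Qed.

Lemma halfspace_scale l a b x : halfspace (mscale l a) (mscale l b) x <-> halfspace a b x.
Proof. by rewrite /halfspace !mdot_scale mle_mmul2l_fin. Qed.

Lemma notin_halfspace_lhs a b x : ~ halfspace a b x -> exists i, a i <> None.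
Proof.
move=> xnotin; apply: contrapT => a0; apply: xnotin; apply/mdot_le => i.
by have -> : a i = None by apply: contrapT => ai; apply: a0; exists i.
Qed.

Definition disjoint_supp a b := forall k, a k = None \/ b k = None.

Definition reduce_lhs a b : mvec R n := fun i => if mleb (a i) (b i) then None else a i.
Definition reduce_rhs a b : mvec R n := fun i => if mleb (a i) (b i) then b i else None.

Lemma reduce_disjoint a b : disjoint_supp (reduce_lhs a b) (reduce_rhs a b).
Proof. by move=> k; rewrite /reduce_lhs /reduce_rhs; case: mleb; auto. Qed.

Lemma reduce_lhsE a b i : reduce_lhs a b i = if mleb (a i) (b i) then None else a i.
Proof. by []. Qed.

Lemma reduce_rhsE a b i : reduce_rhs a b i = if mleb (a i) (b i) then b i else None.
Proof. by []. Qed.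

(* A term a_i x_i with a_i <= b_i is dominated by b_i x_i; a term b_i x_i with
   a_i > b_i can only decide the inequality when x_i = -oo, where it vanishes. *)
Lemma halfspace_reduce a b x :
  halfspace (reduce_lhs a b) (reduce_rhs a b) x <-> halfspace a b x.
Proof.
have le_b0b : mle (mdot (reduce_rhs a b) x) (mdot b x).
  by apply: mle_mdotl => i; rewrite reduce_rhsE; case: mleb; [apply: mle_refl|].
split=> [le0|le]; apply/mdot_le => i.
  case: (mleP (a i) (b i)) => abi.
    exact: mle_trans (mle_mmul2r _ abi) (mle_mdot b x i).
  apply: mle_trans le_b0b; apply: mle_trans le0.
  by have := mle_mdot (reduce_lhs a b) x i; rewrite reduce_lhsE; case: mleP => // /abi.
rewrite reduce_lhsE; case: mleP => abi //.
have le_bx := mle_trans (mle_mdot a x i) le.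
have [bx0|[m bxm]] := mdot_sel b x; first by move: le_bx; rewrite bx0 => /mle_None ->.
apply: mle_trans le_bx _; rewrite bxm.
case: (mleP (a m) (b m)) => abm.
  by have := mle_mdot (reduce_rhs a b) x m; rewrite reduce_rhsE; case: mleP => // /abm.
have xm0 : x m = None.
  apply: contrapT => xm; apply: abm; apply: mle_mmul2r_cancel xm _.
  by rewrite -bxm; apply: mle_trans (mle_mdot a x m) le.
by rewrite xm0 mmulp0.
Qed.

End MaxPlusVectors.

Section Domination.
Variables (R : realType) (n : nat) (a b c d : mvec R n).
Hypotheses (ab_disj : disjoint_supp a b) (cd_disj : disjoint_supp c d).
Hypothesis cd_sub_ab : msubset (halfspace c d) (halfspace a b).

Lemma supp_lhs_sub k : a k <> None -> c k <> None.
Proof.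
move=> ak ck; apply: ak.
have := cd_sub_ab (x := mpoint k 0); rewrite /halfspace !mdot_mpoint ck /=.
case: (ab_disj k) => [//|bk] /(_ I); rewrite bk => /mle_None.
by case: (a k).
Qed.

(* Test on x = (-g) e_i ⊕ (-e) e_j, where both sides of the (c, d)-inequality are 0. *)
Lemma lhs_ratio_le i j (g e : R) : c i = Some g -> d j = Some e ->
  mle (mmul (a i) (Some (- g))) (mmul (b j) (Some (- e))).
Proof.
move=> ci dj; case Eai: (a i) => [al|] //.
have bi : b i = None by case: (ab_disj i); rewrite ?Eai.
have di : d i = None by case: (cd_disj i); rewrite ?ci.
have cj : c j = None by case: (cd_disj j); rewrite ?dj.
have := cd_sub_ab (x := vadd (mpoint i (- g)) (mpoint j (- e))).
rewrite /halfspace !mdot_vadd !mdot_mpoint ci di cj dj bi /= !subrr lexx => /(_ isT).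
by rewrite Eai => /ge_madd[].
Qed.

Lemma subset_halfspace_dominates i0 : a i0 <> None ->
  exists l : R, forall k, mle (a k) (mmul (Some l) (c k)) /\ mle (mmul (Some l) (d k)) (b k).
Proof.
move=> ai0.
pose ratio k := if c k is Some g then mmul (a k) (Some (- g)) else None.
have [m ratio_max] := exists_argmax ratio i0.
have [l Em] : exists l, ratio m = Some l.
  case Erm: (ratio m) (ratio_max i0) => [l|]; first by exists l.
  rewrite /ratio; case: (c i0) (supp_lhs_sub ai0) => [g0|] // _.
  by case: (a i0) ai0.
have [gm cm] : exists gm, c m = Some gm.
  by move: Em; rewrite /ratio; case: (c m) => [gm|] // _; exists gm.
exists l => k; split.
  case Eck: (c k) => [g|]; last first.
    have -> : a k = None by apply: contrapT => /supp_lhs_sub; rewrite Eck.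
    by [].
  by have := ratio_max k; rewrite Em /ratio Eck => /mle_divrMr.
case Edk: (d k) => [e|]; last by rewrite mmulp0.
have rm : mmul (a m) (Some (- gm)) = Some l by rewrite -Em /ratio cm.
by have := lhs_ratio_le cm Edk; rewrite rm => /mle_divlMr.
Qed.

End Domination.

Section CoordinatewiseOptimization.
Variables (T : Type) (m : nat) (better : T -> T -> Prop).
Hypothesis better_refl : forall t, better t t.
Hypothesis better_trans : forall s t u, better s t -> better t u -> better s u.
Variable P : ('I_m -> T) -> Prop.
Hypothesis P_mono : forall f g, (forall i, better (g i) (f i)) -> P g -> P f.
Hypothesis P_step : forall f j, P f ->
  exists t, [/\ better t (f j), P (upd f j t) & forall t', P (upd f j t') -> better t t'].
Implicit Types f g : 'I_m -> T.

Lemma better_upd {f j t} : better t (f j) -> forall i, better (upd f j t i) (f i).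
Proof. by move=> tf i; have [->|ij] := eqVneq i j; rewrite ?upd_same ?upd_other. Qed.

(* Improving coordinate j only makes P easier to satisfy after a later update,
   so coordinates optimized earlier stay optimal. *)
Lemma better_upd2 {f j t} j' t' : better t (f j) ->
  forall i, better (upd (upd f j t) j' t' i) (upd f j' t' i).
Proof.
move=> tf i; have [->|ij'] := eqVneq i j'; first by rewrite !upd_same.
by rewrite [upd _ j' t' i]upd_other // [upd f j' t' i]upd_other //; apply: better_upd.
Qed.

Lemma optimize_coords (s : seq 'I_m) f : P f ->
  exists g, [/\ forall i, better (g i) (f i), forall i, i \notin s -> g i = f i, P g &
    forall j, j \in s -> forall t, P (upd g j t) -> better (g j) t].
Proof.
move=> Pf; elim: s => [|j s [g [gf g_out Pg g_opt]]]; first by exists f; split.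
have [t [tg Pgt t_opt]] := P_step j Pg.
exists (upd g j t); split=> // [i|i|j' j'_in t' /(P_mono (better_upd2 _ _ tg)) Pt'].
- exact: better_trans (better_upd tg i) (gf i).
- by rewrite inE negb_or => /andP[ij /g_out <-]; rewrite upd_other.
have [j'j|j'j] := eqVneq j' j; first by subst j'; rewrite upd_same; apply: t_opt.
rewrite upd_other //; apply: g_opt Pt'.
by move: j'_in; rewrite inE (negbTE j'j).
Qed.

End CoordinatewiseOptimization.

Section Extremal.
Variables (R : realType) (n : nat) (V : mvec R n -> Prop).
Implicit Types a b c d : mvec R n.

Lemma least_rhs_coef a b j : msubset V (halfspace a b) ->
  exists t, [/\ mle t (b j), msubset V (halfspace a (upd b j t)) &
    forall t', msubset V (halfspace a (upd b j t')) -> mle t t'].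
Proof.
move=> V_H.
have feasE t : msubset V (halfspace a (upd b j t)) <->
    forall v, V v -> mle (mdot a v) (madd (mmul t (v j)) (mdot (upd b j None) v)).
  have updE v : mdot (upd b j t) v = madd (mmul t (v j)) (mdot (upd b j None) v).
    by rewrite (mdot_upd _ _ j) upd_same upd_upd.
  by split=> H v /H; rewrite /halfspace updE.
have feas_bj v : V v -> mle (mdot a v) (madd (mmul (b j) (v j)) (mdot (upd b j None) v)).
  by rewrite -mdot_upd; apply: V_H.
have [t [feas_t least_t]] := least_scalar_solution feas_bj.
exists t; split; [exact: least_t | exact/feasE | by move=> t' /feasE; apply: least_t].
Qed.

Lemma greatest_lhs_coef a b k : (exists v, V v /\ v k <> None) -> msubset V (halfspace a b) ->
  exists t, [/\ mle (a k) t, msubset V (halfspace (upd a k t) b) &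
    forall t', msubset V (halfspace (upd a k t') b) -> mle t' t].
Proof.
move=> [v0 [Vv0 v0k]] V_H.
have feasE t : msubset V (halfspace (upd a k t) b) <->
    forall v, V v -> mle (mmul t (v k)) (mdot b v).
  split=> H v Vv.
    by have := mle_mdot (upd a k t) v k; rewrite upd_same => /mle_trans; apply; apply: H.
  apply/mdot_le => i; have [->|ik] := eqVneq i k; first by rewrite upd_same; apply: H.
  by rewrite upd_other //; apply: mle_trans (mle_mdot a v i) (V_H v Vv).
have [t [feas_t great_t]] := greatest_scalar_solution (q := fun v => v k) (mdot b) Vv0 v0k.
exists t; split; last by move=> t' /feasE; apply: great_t.
  by apply: great_t => v Vv; apply: mle_trans (mle_mdot a v k) (V_H v Vv).
exact/feasE.
Qed.

Definition extremal a b := [/\ disjoint_supp a b, msubset V (halfspace a b),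
  forall j t, msubset V (halfspace a (upd b j t)) -> mle (b j) t &
  forall k, b k = None -> forall t, msubset V (halfspace (upd a k t) b) -> mle t (a k)].

Lemma exists_extremal a b : full_support V -> disjoint_supp a b -> msubset V (halfspace a b) ->
  exists a' b', [/\ forall i, mle (a i) (a' i), forall i, mle (b' i) (b i) & extremal a' b'].
Proof.
move=> hsupp ab_disj V_H.
have [b' [b'b _ V_H' b'_least]] :=
  optimize_coords (@mle_refl R) (fun p q r => @mle_trans R q p r)
    (P := fun f => msubset V (halfspace a f))
    (fun f g gf Pg v Vv => halfspace_subset (fun i => mle_refl (a i)) gf (Pg v Vv))
    (fun f j Pf => least_rhs_coef j Pf) (enum 'I_n) V_H.
have [a' [a'a a'_out V_H'' a'_greatest]] :=
  optimize_coords (better := fun p q => mle q p) (@mle_refl R)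
    (fun p q r pq qr => mle_trans qr pq)
    (P := fun f => msubset V (halfspace f b'))
    (fun f g fg Pg v Vv => halfspace_subset fg (fun i => mle_refl (b' i)) (Pg v Vv))
    (fun f j Pf => greatest_lhs_coef (hsupp j) Pf) [seq k <- enum 'I_n | b' k == None] V_H'.
exists a', b'; split=> //; split=> //.
- move=> k; have [b'k|b'k] := eqVneq (b' k) None; [by right | left].
  rewrite a'_out ?mem_filter ?(negbTE b'k) //.
  by case: (ab_disj k) => // bk; move: (b'b k); rewrite bk => /mle_None /eqP; rewrite (negbTE b'k).
- move=> j t /(fun H v Vv => halfspace_subset a'a (fun i => mle_refl _) (H v Vv)).
  by apply: b'_least; rewrite mem_enum.
- by move=> k b'k t; apply: a'_greatest; rewrite mem_filter b'k eqxx mem_enum.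
Qed.

Lemma extremal_minimal a b i0 : extremal a b -> a i0 <> None ->
  forall c d, msubset V (halfspace c d) -> msubset (halfspace c d) (halfspace a b) ->
  msubset (halfspace a b) (halfspace c d).
Proof.
move=> [ab_disj V_H b_least a_greatest] ai0 c d V_Hcd Hcd_H.
have [l dom] := subset_halfspace_dominates ab_disj (reduce_disjoint c d)
  (fun x h => Hcd_H x ((halfspace_reduce c d x).1 h)) ai0.
pose c' := mscale l (reduce_lhs c d); pose d' := mscale l (reduce_rhs c d).
have H'E x : halfspace c' d' x <-> halfspace c d x by rewrite halfspace_scale halfspace_reduce.
have V_H' : msubset V (halfspace c' d') by move=> v /V_Hcd /H'E.
have a_c' i : mle (a i) (c' i) := (dom i).1.
have d'_b i : mle (d' i) (b i) := (dom i).2.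
have b_d' j : mle (b j) (d' j).
  apply: b_least => v /V_H' le; apply: mle_trans (mle_mdotl v a_c') (mle_trans le _).
  apply: mle_mdotl => i; have [->|ij] := eqVneq i j; rewrite ?upd_same ?upd_other //.
  exact: mle_refl.
have c'_a k : mle (c' k) (a k).
  case Ec'k: (c' k) => [g|] //; rewrite -Ec'k; apply: a_greatest.
    apply: mle_None; apply: mle_trans (b_d' k) _.
    case: (reduce_disjoint c d k) => E; last by rewrite /d' /mscale E.
    by move: Ec'k; rewrite /c' /mscale E.
  move=> v /V_H' le; apply: mle_trans _ (mle_trans le (mle_mdotl v d'_b)).
  apply: mle_mdotl => i; have [->|ik] := eqVneq i k; rewrite ?upd_same ?upd_other //.
  exact: mle_refl.
by move=> x /(halfspace_subset c'_a b_d') /H'E.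
Qed.

End Extremal.

Theorem theorem3p5 (R : realType) (n : nat) (V : mvec R n -> Prop)
  (hcone : mp_cone V) (hsupp : full_support V) (a b : mvec R n)
  (hVH : msubset V (halfspace a b)) :
  exists a' b' : mvec R n,
    [/\ msubset V (halfspace a' b'),
        msubset (halfspace a' b') (halfspace a b) &
        forall a'' b'' : mvec R n,
          msubset V (halfspace a'' b'') ->
          msubset (halfspace a'' b'') (halfspace a' b') ->
          msubset (halfspace a' b') (halfspace a'' b'')].
Proof.
have [[a1 [b1 [V_H1 H1_H [x x_notin]]]]|no_proper] := pselect (exists a1 b1,
  [/\ msubset V (halfspace a1 b1), msubset (halfspace a1 b1) (halfspace a b) &
      exists x, ~ halfspace a1 b1 x]); last first.
  exists a, b; split=> // a'' b'' V_H'' H''_H x _.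
  by apply: contrapT => x_notin; apply: no_proper; exists a'', b''; split=> //; exists x.
have V_H0 : msubset V (halfspace (reduce_lhs a1 b1) (reduce_rhs a1 b1)).
  by move=> v /V_H1 /halfspace_reduce.
have [a' [b' [a0a' b'b0 ext]]] := exists_extremal hsupp (reduce_disjoint a1 b1) V_H0.
have H'_H1 : msubset (halfspace a' b') (halfspace a1 b1).
  by move=> y /(halfspace_subset a0a' b'b0) /halfspace_reduce.
have [i0 a'i0] := notin_halfspace_lhs (fun h => x_notin (H'_H1 x h)).
exists a', b'; split; [by case: ext | by move=> y /H'_H1 /H1_H | exact: extremal_minimal ext a'i0].
Qed.
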